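(* For any constant $\epsilon\in(0,1)$, there exists an $\widetilde{O}(n^{2/3})$-round deterministic $\mathsf{CONGEST}$ algorithm that lets each vertex $v_i$ of $P$ obtain (i) a good approximation of $X(\{i\},[j,\infty))$ for all $j>i$, and (ii) a good approximation of $X((-\infty,j],\{i\})$ for all $j<i$.
   Context: $G=(V,E)$ is a directed graph with $n=|V|$ and positive integer edge weights bounded by a polynomial in $n$; path lengths are sums of weights. $G$ is also the communication network (communication over edges in both directions). $\mathsf{CONGEST}$: synchronous rounds, each vertex may send an $O(\log n)$-bit message to each neighbour per round, unique identifiers, unlimited local computation. $P=(s=v_0,\dots,v_{h_{st}}=t)$ is a given shortest $s$-$t$ path; the endpoints of each edge of $P$ know it belongs to $P$, and each $v_i$ knows $i$, $\mathrm{dist}(s,v_i)$, $\mathrm{dist}(v_i,t)$. Let $\zeta=n^{2/3}$. For nonempty sets of integers $A,B$ with $\max A<\min B$, $X(A,B)$ is the minimum length of an $s$-$t$ path consisting of the subpath of $P$ from $s$ to $v_a$, a detour path from $v_a$ to $v_b$ with at most $\zeta$ edges sharing no edge with $P$, and the subpath of $P$ from $v_b$ to $t$, over all $a\in A$, $b\in B$ with $0\le a,b\le h_{st}$; $Y(A,B)$ is defined the same way without the bound on the number of edges of the detour (minimum over an empty set is $\infty$). A number $x$ is a good approximation of $X(A,B)$ if $Y(A,B)\le x\le(1+\epsilon)X(A,B)$. *)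

From HB Require Import structures.
From mathcomp Require Import all_boot all_order all_algebra.
From mathcomp Require Export reals.
Set Implicit Arguments. Unset Strict Implicit. Unset Printing Implicit Defensive.
Import Order.TTheory GRing.Theory Num.Theory.

(* w u v = 0 means "no edge u -> v"; w u v > 0 is the (positive integer)     *)
(* weight of the directed edge u -> v.                                       *)
Section Graph.
Variable n : nat.
Definition weights := 'I_n -> 'I_n -> nat.
Variable w : weights.

Definition is_walk (x : 'I_n) (p : seq 'I_n) : bool :=
  path (fun a b => 0 < w a b) x p.

Definition wedges (x : 'I_n) (p : seq 'I_n) : seq ('I_n * 'I_n) :=
  zip (x :: p) p.

Definition wlen (x : 'I_n) (p : seq 'I_n) : nat :=
  \sum_(e <- wedges x p) w e.1 e.2.

Definition shortest_path (s : 'I_n) (Pt : seq 'I_n) : Prop :=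
  is_walk s Pt /\
  forall q, is_walk s q -> last s q = last s Pt -> wlen s Pt <= wlen s q.

(* communication links: edges in either direction (no self loops) *)
Definition adj (u v : 'I_n) : bool := (u != v) && ((0 < w u v) || (0 < w v u)).

Section Path.
Variables (s : 'I_n) (Pt : seq 'I_n).
(* P = (v_0, ..., v_h), h = h_st = size Pt *)
Definition hst := size Pt.
Definition pv (i : nat) : 'I_n := nth s (s :: Pt) i.
(* length of the subpath of P from s to v_i  (= dist(s, v_i)) *)
Definition pref (i : nat) : nat := wlen s (take i Pt).
(* length of the subpath of P from v_i to t  (= dist(v_i, t)) *)
Definition suff (i : nat) : nat := wlen (pv i) (drop i Pt).
Definition Pedges := wedges s Pt.

(* L is the length of an s-t path  P[s,v_a] o D o P[v_b,t]  where D is a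
   detour walk from v_a to v_b sharing no (directed) edge with P; if
   [bounded] then D has at most zeta = n^(2/3) edges, i.e. |D|^3 <= n^2. *)
Definition cand (bounded : bool) (A B : nat -> Prop) (L : nat) : Prop :=
  exists a b (q : seq 'I_n),
    [/\ A a, B b, a <= hst, b <= hst &
    [/\ is_walk (pv a) q, last (pv a) q = pv b,
        ~~ has (fun e => e \in Pedges) (wedges (pv a) q),
        (bounded ==> (size q ^ 3 <= n ^ 2)) &
        L = pref a + wlen (pv a) q + suff b]].

(* X(A,B) = min (cand true A B), Y(A,B) = min (cand false A B), min of the
   empty set = oo.  Extended values: None = oo.  x is a good approximation
   of X(A,B) iff Y(A,B) <= x <= (1+eps) X(A,B).  Both inequalities are
   written out against the minimum of a set of naturals:
     Y <= x      <->  x = oo, or some Y-candidate L has L <= x;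
     x <= (1+eps) X  <->  every X-candidate L has x finite, x <= (1+eps) L. *)
Definition good_approx (R : realType) (eps : R) (x : option R)
    (A B : nat -> Prop) : Prop :=
  (match x return Prop with None => True
   | Some x => exists L, cand false A B L /\ (L%:R <= x)%R end) /\
  (forall L, cand true A B L ->
     match x return Prop with None => False | Some x => (x <= (1 + eps) * L%:R)%R end).
End Path.
End Graph.

Record LocalInput := {
  li_n : nat;
  li_id : nat;
  (* one entry per neighbour u: (id u, w(v,u), w(u,v), (v,u) in P, (u,v) in P) *)
  li_nbrs : seq (nat * nat * nat * bool * bool);
  (* if v = v_i is on P: Some (i, dist(s,v_i), dist(v_i,t)) *)
  li_path : option (nat * nat * nat) }.

(* What a vertex received in one round: sender id |-> message (None = none). *)
Definition Inbox := nat -> option nat.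

(* A deterministic algorithm: the message sent to the neighbour with a given
   id, and the final output, are arbitrary functions (unlimited local
   computation) of the local input and the history of received messages;
   [rounds n] is the number of rounds run on n-vertex graphs.  Output:
   (j |-> approximation of X({i},[j,oo)),  j |-> approximation of
   X((-oo,j],{i})), values in R extended with None = oo. *)
Record Algorithm (R : realType) := {
  alg_msg : LocalInput -> seq Inbox -> nat -> option nat;
  alg_out : LocalInput -> seq Inbox -> (nat -> option R) * (nat -> option R);
  alg_rounds : nat -> nat }.

Section Exec.
Variables (R : realType) (Alg : Algorithm R).
Variables (n : nat) (w : weights n) (id : 'I_n -> nat) (s : 'I_n) (Pt : seq 'I_n).

Definition local_input (v : 'I_n) : LocalInput :=
  {| li_n := n;
     li_id := id v;
     li_nbrs := [seq (id u, w v u, w u v, (v, u) \in Pedges s Pt,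
                      (u, v) \in Pedges s Pt) | u <- enum 'I_n & adj w u v];
     li_path := if v \in s :: Pt then
                  let i := index v (s :: Pt) in
                  Some (i, pref w s Pt i, suff w s Pt i)
                else None |}.

Fixpoint history (r : nat) : 'I_n -> seq Inbox :=
  match r with
  | 0 => fun _ => [::]
  | r'.+1 => fun v =>
      rcons (history r' v)
        (fun x => match [pick u | adj w u v && (id u == x)] with
                  | Some u => alg_msg Alg (local_input u) (history r' u) (id v)
                  | None => None
                  end)
  end.

(* every message sent during the run has O(log n) bits: value < n^cB *)
Definition bandwidth_ok (cB : nat) : Prop :=
  forall r u v, r < alg_rounds Alg n -> adj w u v ->
    match alg_msg Alg (local_input u) (history r u) (id v) return Prop with
    | None => True
    | Some m => m < n ^ cB
    end.

Definition output (v : 'I_n) := alg_out Alg (local_input v) (history (alg_rounds Alg n) v).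
End Exec.

(* Detours are found by a Bellman-Ford style relaxation in which time stands for rounded
   length.  The rounds form O(log n) phases of (2m+1)(zeta+1) rounds; in phase k every weight
   is rounded up to a multiple of 2^k, and a vertex reads the value of a neighbour across an
   edge of rounded weight d from the message that neighbour sent d rounds earlier.  The
   forward value of u at time T is the largest b such that a detour from u avoiding the edges
   of P reaches v_b with rounded length plus rounded dist(v_b, t) at most T; the backward
   value symmetrically records the smallest a from which u is reached.  Every reported length
   is that of a genuine detour, hence at least Y.  Conversely, a detour with at most zeta edges
   and total length Q is seen in the phase where m (zeta+1) 2^k is about Q: rounding adds at
   most (zeta+1) 2^k <= Q/m and the rounded length still fits into the phase.  With 1/m < eps
   this is a (1+eps)-approximation within O(zeta log n) rounds. *)

From HB Require Import structures.
From mathcomp Require Import all_boot all_order all_algebra.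
From mathcomp Require Import reals.
From mathcomp Require Import zify lra.
Import Order.TTheory GRing.Theory Num.Theory.
Set Implicit Arguments. Unset Strict Implicit. Unset Printing Implicit Defensive.

Lemma uniq_path_neq (T : eqType) (x : T) p : uniq (x :: p) -> path (fun a b => a != b) x p.
Proof.
elim: p x => [|y p IH] x //= /andP [x_notin /[dup] /andP [_ uniq_p] /IH ->].
by rewrite andbT; apply: contraNneq x_notin => ->; rewrite mem_head.
Qed.

Lemma last_rev_belast (T : Type) (x : T) p : last (last x p) (rev (belast x p)) = x.
Proof. by rewrite -(last_cons x) -rev_rcons -lastI rev_cons last_rcons. Qed.

Section Walks.
Variables (n : nat) (w : weights n).
Implicit Types (x y : 'I_n) (p q : seq 'I_n).

Lemma wlen_nil x : wlen w x [::] = 0.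
Proof. by rewrite /wlen big_nil. Qed.

Lemma wlen_cons x y p : wlen w x (y :: p) = w x y + wlen w y p.
Proof. by rewrite /wlen big_cons. Qed.

Lemma wedges_cat x p1 p2 :
  wedges x (p1 ++ p2) = wedges x p1 ++ wedges (last x p1) p2.
Proof. by elim: p1 x => [|y p1 IH] x //=; rewrite /wedges /= -IH. Qed.

Lemma wlen_cat x p1 p2 : wlen w x (p1 ++ p2) = wlen w x p1 + wlen w (last x p1) p2.
Proof. by rewrite /wlen wedges_cat big_cat. Qed.

Lemma wlen_rcons x p y : wlen w x (rcons p y) = wlen w x p + w (last x p) y.
Proof. by rewrite -cats1 wlen_cat wlen_cons wlen_nil addn0. Qed.

Lemma all_wedges (a : pred ('I_n * 'I_n)) x p :
  all a (wedges x p) = path (fun u v => a (u, v)) x p.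
Proof. by elim: p x => [|y p IH] x //=; rewrite -IH. Qed.

Lemma wlen_le_size B x p : (forall u v, w u v <= B) -> wlen w x p <= size p * B.
Proof.
move=> wB; elim: p x => [|y p IH] x; first by rewrite wlen_nil.
by rewrite wlen_cons mulSn leq_add.
Qed.

Lemma walk_cut_loop x p : is_walk w x p -> ~~ uniq (x :: p) ->
  exists2 p', size p' < size p &
    [/\ is_walk w x p', last x p' = last x p,
        {subset wedges x p' <= wedges x p} & wlen w x p' < wlen w x p].
Proof.
elim: p x => [|y p IH] x // walk_yp; rewrite [uniq _]/= negb_and negbK.
case/orP => [x_in | /(IH y (path_sorted walk_yp)) [p' size_p' [walk_p' last_p' sub_p' wlen_p']]].
  move: walk_yp; case/splitPr: x_in => p1 p2.
  rewrite /is_walk cat_path /= => /and3P [_ w_loop walk_p2].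
  exists p2; first by rewrite size_cat /= addnS ltnS leq_addl.
  split => //; first by rewrite last_cat.
    by move=> e e_in; rewrite wedges_cat mem_cat /wedges /= inE e_in !orbT.
  rewrite wlen_cat wlen_cons -[X in X < _]add0n addnA ltn_add2r.
  exact: leq_trans w_loop (leq_addl _ _).
exists (y :: p') => //; split => //.
- by move: walk_yp; rewrite /is_walk /= => /andP [-> _].
- by move=> e; rewrite /wedges /= !inE => /orP [-> //| /sub_p' ->]; rewrite orbT.
- by rewrite !wlen_cons ltn_add2l.
Qed.

Lemma walk_uniq x p : is_walk w x p -> exists p',
  [/\ is_walk w x p', last x p' = last x p, uniq (x :: p'), size p' <= size p &
      {subset wedges x p' <= wedges x p} /\ wlen w x p' <= wlen w x p].
Proof.
have [k] := ubnP (size p); elim: k p => // k IH p size_p walk_p.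
have [uniq_p | /(walk_cut_loop walk_p) [p' size_p' [walk_p' last_p' sub_p' wlen_p']]] :=
  boolP (uniq (x :: p)).
  by exists p; do 2?split.
have [|p'' [walk_p'' last_p'' uniq_p'' size_p'' [sub_p'' wlen_p'']]] := IH p' _ walk_p'.
  exact: leq_trans size_p' size_p.
exists p''; split => //; first by rewrite last_p''.
  exact: leq_trans size_p'' (ltnW size_p').
split; first by move=> e /sub_p'' /sub_p'.
exact: leq_trans wlen_p'' (ltnW wlen_p').
Qed.

Lemma shortest_path_uniq s Pt : shortest_path w s Pt -> uniq (s :: Pt).
Proof.
case=> walk_P P_min; apply/negPn/negP => /(walk_cut_loop walk_P) [p' _ [walk_p' last_p' _]].
by rewrite ltnNge P_min.
Qed.

End Walks.

Lemma wlen_transpose n (w : weights n) x p :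
  wlen (fun u v => w v u) x p = wlen w (last x p) (rev (belast x p)).
Proof.
elim: p x => [|y p IH] x; first by rewrite /= !wlen_nil.
by rewrite wlen_cons IH /= rev_cons wlen_rcons last_rev_belast addnC.
Qed.

Definition ceiln a U := (a + U.-1) %/ U.

Lemma ceilnP a U : 0 < U -> a <= ceiln a U * U <= a + U.-1.
Proof.
move=> U_gt0; rewrite leq_trunc_div andbT.
have := ltn_ceil (a + U.-1) U_gt0; rewrite /ceiln mulSn; lia.
Qed.

Lemma ceiln_gt0 a U : 0 < U -> (0 < ceiln a U) = (0 < a).
Proof. by move=> U_gt0; rewrite divn_gt0 //; lia. Qed.

Lemma wlen_ceil n (w d : weights n) U x p : 0 < U ->
  path (fun u v => d u v == ceiln (w u v) U) x p ->
  wlen w x p <= wlen d x p * U <= wlen w x p + size p * U.-1.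
Proof.
move=> U_gt0; elim: p x => [|y p IH] x /=; first by rewrite !wlen_nil.
case/andP => /eqP d_xy /IH /andP [lo hi]; rewrite !wlen_cons d_xy mulnDl.
have /andP [lo' hi'] := ceilnP (w x y) U_gt0.
by rewrite leq_add //= mulSn addnACA leq_add.
Qed.

Section Relaxation.
Variables (n horizon : nat) (d : weights n) (base : nat -> 'I_n -> nat).
Variable F : nat -> 'I_n -> nat.
Hypothesis F_eq : forall T u, T < horizon ->
  F T u = maxn (base T u) (\max_(y | 0 < d u y <= T) F (T - d u y) y).

Lemma relax_sound T u : T < horizon -> 0 < F T u -> exists p,
  [/\ is_walk d u p, wlen d u p <= T & F T u = base (T - wlen d u p) (last u p)].
Proof.
elim/ltn_ind: T u => T IH u T_lt; rewrite F_eq //.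
set steps := \max_(y | _) _.
have [steps_le _ | base_lt F_gt0] := leqP steps (base T u).
  by exists [::]; rewrite wlen_nil subn0.
have [y0 step_y0 | no_step] := pickP (fun y => 0 < d u y <= T); last first.
  by move: base_lt; rewrite /steps big_pred0.
move: base_lt F_gt0; rewrite /steps (bigop.bigmax_eq_arg y0) //.
case: arg_maxnP => // y /andP [d_gt0 d_le] _ _ F_gt0.
have T'_lt : T - d u y < T by rewrite ltn_subrL d_gt0 (leq_trans d_gt0 d_le).
have [p [walk_p wlen_p ->]] := IH _ T'_lt y (ltn_trans T'_lt T_lt) F_gt0.
exists (y :: p); rewrite /is_walk /= d_gt0 wlen_cons subnDA; split => //.
by rewrite -leq_subRL.
Qed.

Lemma relax_complete T u p : T < horizon -> is_walk d u p -> wlen d u p <= T ->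
  base (T - wlen d u p) (last u p) <= F T u.
Proof.
elim: p T u => [|y p IH] T u T_lt /=.
  by rewrite wlen_nil subn0 F_eq // leq_maxl => _ _.
case/andP => d_gt0 walk_p; rewrite wlen_cons subnDA => wlen_le.
have d_le : d u y <= T by apply: leq_trans (leq_addr _ _) wlen_le.
rewrite F_eq // (leq_trans _ (leq_maxr _ _)) //.
apply: leq_trans (leq_bigmax_cond y _); last by apply/andP.
apply: (IH _ _ _ walk_p); first exact: leq_ltn_trans (leq_subr _ _) T_lt.
by rewrite leq_subRL.
Qed.

End Relaxation.

Definition zeta n := \max_(z < n.+1 | z ^ 3 <= n ^ 2) z.

Lemma zeta_max z n : z ^ 3 <= n ^ 2 -> z <= zeta n.
Proof.
move=> z_le; have z_lt : z < n.+1 by rewrite ltnS; nia.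
exact: (@leq_bigmax_cond _ (fun i : 'I_n.+1 => i ^ 3 <= n ^ 2) (@nat_of_ord _) (Ordinal z_lt)).
Qed.

Lemma zeta_cube n : zeta n ^ 3 <= n ^ 2.
Proof.
by rewrite /zeta; apply: (big_ind (fun z => z ^ 3 <= n ^ 2)) => // x y; case: (leqP x y).
Qed.

Lemma zeta_le n : zeta n <= n.
Proof. by have := zeta_cube n; nia. Qed.

Lemma zeta_succ_cube n : 0 < n -> (zeta n).+1 ^ 3 <= 8 * n ^ 2.
Proof.
move=> n_gt0; have z_gt0 : 0 < zeta n by apply: zeta_max; rewrite exp1n expn_gt0 n_gt0.
apply: leq_trans (_ : (2 * zeta n) ^ 3 <= _); first by rewrite leq_exp2r //; lia.
by rewrite expnMn leq_mul2l zeta_cube.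
Qed.

Definition scale_of M Q := trunc_log 2 (Q %/ M).

Lemma scale_ofP M Q : 0 < M ->
  Q < 2 * M * 2 ^ scale_of M Q /\ M * (2 ^ scale_of M Q).-1 <= Q.
Proof.
move=> M_gt0; rewrite /scale_of; split.
  apply: leq_trans (ltn_ceil Q M_gt0) _.
  by rewrite mulnAC leq_mul2r -expnS trunc_log_ltn ?orbT.
have [M_le | Q_lt] := leqP M Q; last by rewrite divn_small // trunc_log0 /= muln0.
apply: leq_trans (leq_mul (leqnn M) (leq_pred _)) _.
by rewrite mulnC -leq_divRL // trunc_logP // divn_gt0.
Qed.

Lemma rounding_fits m z Q k A (U := 2 ^ scale_of (m * z.+1) Q) : 0 < m -> k <= z.+1 ->
  A * U <= Q + k * U.-1 -> A < (2 * m).+1 * z.+1 /\ m * (A * U) <= m.+1 * Q.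
Proof.
move=> m_gt0 k_le A_le; have M_gt0 : 0 < m * z.+1 by rewrite muln_gt0 m_gt0.
have [Q_lt Q_ge] := scale_ofP Q M_gt0.
rewrite -/U in Q_lt Q_ge; have U_gt0 : 0 < U by rewrite expn_gt0.
have kU : k * U.-1 <= z.+1 * U.-1 := leq_mul k_le (leqnn _).
split.
  rewrite -(ltn_pmul2r U_gt0); apply: leq_ltn_trans A_le _.
  have : z.+1 * U.-1 < z.+1 * U by rewrite ltn_pmul2l // ltn_predL.
  by nia.
by nia.
Qed.

Definition window m n := (2 * m).+1 * (zeta n).+1.
Definition nscales c n := (c + 2) * (trunc_log 2 n).+1.
Definition rounds m c n := if n is 0 then 0 else nscales c n * window m n.

Lemma roundsE m c n : 0 < n -> rounds m c n = nscales c n * window m n.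
Proof. by case: n. Qed.

Lemma scale_of_lt c n M Q : 0 < n -> Q <= 2 * n ^ c.+1 -> scale_of M Q < nscales c n.
Proof.
move=> n_gt0 Q_le; set L := (trunc_log 2 n).+1.
have Q_lt : Q < 2 ^ nscales c n.
  rewrite /nscales mulnC expnM addn2 expnS; apply: leq_ltn_trans Q_le _.
  apply: leq_ltn_trans (leq_mul (_ : 2 <= 2 ^ L) (leqnn _)) _.
    by rewrite -[X in X <= _]expn1 leq_exp2l.
  by rewrite ltn_pmul2l ?expn_gt0 // ltn_exp2r // trunc_log_ltn.
apply: leq_ltn_trans (leq_trunc_log _ (leq_div Q M)) _.
have [-> | Q_gt0] := posnP Q; first by rewrite trunc_log0 /nscales muln_gt0 addn2.
by rewrite -(ltn_exp2l _ _ (ltnSn 1)); apply: leq_ltn_trans (trunc_logP _ Q_gt0) Q_lt.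
Qed.

Lemma rounds_cube m c n :
  rounds m c n ^ 3 <= 8 * ((c + 2) * (2 * m).+1) ^ 3 * n ^ 2 * (trunc_log 2 n).+1 ^ 3.
Proof.
case: n => [|n] //; have := zeta_succ_cube (ltn0Sn n).
rewrite /rounds /nscales /window !expnMn.
set Z := _ ^ 3; move: (_ ^ 3) (_ ^ 3) (_ ^ 3) => C M L Z_le.
have -> : L * M * (C * Z) = L * M * C * Z by rewrite !mulnA.
apply: leq_trans (leq_mul (leqnn _) Z_le) _; by apply/eqP; nia.
Qed.

Lemma approx_le (R : realType) (eps : R) m x L : (0 < eps)%R -> (eps^-1 < m%:R)%R ->
  m * x <= m.+1 * L -> (x%:R <= (1 + eps) * L%:R :> R)%R.
Proof.
move=> eps_gt0 m_gt; rewrite -(ler_nat R) !natrM -addn1 natrD => mx_le.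
have m_gt0 : (0 < m%:R :> R)%R by apply: lt_trans m_gt; rewrite invr_gt0.
have eps_m : (1 < eps * m%:R :> R)%R by rewrite -ltr_pdivrMl // mulr1.
have L_ge0 : (0 <= L%:R :> R)%R by rewrite ler0n.
nra.
Qed.

Definition omin (a b : option nat) : option nat :=
  match a, b with
  | Some x, Some y => Some (minn x y)
  | Some _, None => a
  | None, _ => b
  end.

Definition ominl (l : seq (option nat)) := foldr omin None l.

Lemma ominl_mem l x : ominl l = Some x -> Some x \in l.
Proof.
elim: l x => [|[y|] l IH] x //=; rewrite inE; last by move/IH ->; rewrite orbT.
case E: (ominl l) => [z|] /= [<-]; last by rewrite eqxx.
by rewrite /minn; case: ltnP => _; rewrite ?eqxx ?(IH _ E) ?orbT.
Qed.

Lemma ominl_le l y : Some y \in l -> exists2 x, ominl l = Some x & x <= y.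
Proof.
elim: l => [|a l IH] //=; rewrite inE => /orP [/eqP <- | /IH [x -> x_le]] /=.
  by case: (ominl l) => [z|] /=; [exists (minn y z); rewrite ?geq_minl | exists y].
by case: a => [a|] /=; [exists (minn a x); rewrite ?(leq_trans (geq_minr _ _)) | exists x].
Qed.

Definition clock m n r := r %% window m n.
Definition unit_len m n r := 2 ^ (r %/ window m n).

Lemma window_gt0 m n : 0 < window m n.
Proof. by rewrite muln_gt0. Qed.

Lemma clock_phase m n k T : T < window m n ->
  clock m n (k * window m n + T) = T /\ unit_len m n (k * window m n + T) = 2 ^ k.
Proof.
move=> T_lt; rewrite /clock /unit_len modnMDl modn_small //.
by rewrite divnMDl ?window_gt0 // divn_small ?addn0.
Qed.

Definition Entry := (nat * nat * nat * bool * bool)%type.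
Definition entry_id (e : Entry) := e.1.1.1.1.
Definition entry_weight (fwd : bool) (e : Entry) := if fwd then e.1.1.1.2 else e.1.1.2.
Definition entry_on_path (fwd : bool) (e : Entry) := if fwd then e.1.2 else e.2.

(* Maxima then select the furthest target v_b (value b.+1) forward and the earliest source
   v_a (value n - a) backward; 0 means that nothing has been reached. *)
Definition rank (fwd : bool) n i := if fwd then i.+1 else n - i.

Definition anchor (fwd : bool) (li : LocalInput) U T :=
  if li_path li is Some (i, pr, su) then
    if ceiln (if fwd then su else pr) U <= T then rank fwd (li_n li) i else 0
  else 0.

Definition pack n (x : nat * nat) := x.1 + n.+1 * x.2.
(* The clamp bounds decoded values by n without any invariant on the received messages. *)
Definition unpack (fwd : bool) n (o : option nat) :=
  if o is Some p then minn n (if fwd then p %% n.+1 else p %/ n.+1) else 0.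

Lemma unpack_pack fwd n x : x.1 <= n -> x.2 <= n ->
  unpack fwd n (Some (pack n x)) = if fwd then x.1 else x.2.
Proof.
move=> x1_le x2_le; rewrite /= /pack addnC mulnC.
case: fwd; first by rewrite modnMDl modn_small ?(minn_idPr x1_le).
by rewrite divnMDl // divn_small // addn0 (minn_idPr x2_le).
Qed.

Lemma pack_lt n x : 2 <= n -> x.1 <= n -> x.2 <= n -> pack n x < n ^ 4.
Proof.
move=> n_ge2 x1_le x2_le; have n_sq : n.+1 <= n ^ 2 by nia.
apply: (@leq_trans (n.+1 * n.+1)); first by rewrite /pack; nia.
by rewrite (_ : 4 = 2 + 2) // expnD leq_mul.
Qed.

Definition state m (li : LocalInput) (look : nat -> nat -> option nat) r (fwd : bool) :=
  let n := li_n li in let U := unit_len m n r in let T := clock m n r in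
  maxn (anchor fwd li U T)
    (\max_(e <- li_nbrs li | (0 < entry_weight fwd e) && ~~ entry_on_path fwd e &&
                             (ceiln (entry_weight fwd e) U <= T))
       unpack fwd n (look (r - ceiln (entry_weight fwd e) U) (entry_id e))).

Definition lookup (h : seq Inbox) k x := nth (fun _ => None) h k x.

Definition message m (li : LocalInput) (h : seq Inbox) (_ : nat) : option nat :=
  Some (pack (li_n li) (state m li (lookup h) (size h) true, state m li (lookup h) (size h) false)).

Definition estimate m c (fwd : bool) (li : LocalInput) (h : seq Inbox) j : option nat :=
  if li_path li is Some (_, pr, su) then
    ominl [seq if rank fwd (li_n li) j <= state m li (lookup h) r fwd
               then Some ((if fwd then pr else su) + clock m (li_n li) r * unit_len m (li_n li) r)
               else None | r <- iota 0 (rounds m c (li_n li))]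
  else None.

Definition algorithm (R : realType) m c : Algorithm R :=
  {| alg_msg := message m;
     alg_out := fun li h => (fun j => omap (fun x : nat => x%:R%R) (estimate m c true li h j),
                             fun j => omap (fun x : nat => x%:R%R) (estimate m c false li h j));
     alg_rounds := rounds m c |}.

Lemma good_approx_of_estimate (R : realType) n (w : weights n) s Pt (eps : R) m
    (x : option nat) (A B : nat -> Prop) : (0 < eps)%R -> (eps^-1 < m%:R)%R ->
  (forall x', x = Some x' -> exists L, cand w s Pt false A B L /\ L <= x') ->
  (forall L, cand w s Pt true A B L -> exists2 x', x = Some x' & m * x' <= m.+1 * L) ->
  good_approx w s Pt eps (omap (fun x : nat => x%:R%R) x) A B.
Proof.
move=> eps_gt0 m_gt sound complete; split.
  case: x sound complete => [x' /(_ _ erefl) [L [L_cand L_le]] _ | //] /=.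
  by exists L; rewrite ler_nat.
by move=> L /complete [x' -> mx_le] /=; apply: approx_le mx_le.
Qed.

Section Execution.
Variables (R : realType) (m c n : nat) (w : weights n) (id : 'I_n -> nat).
Variables (s : 'I_n) (Pt : seq 'I_n).
Hypotheses (id_inj : injective id) (P_shortest : shortest_path w s Pt).

Local Notation li := (local_input w id s Pt).
Local Notation hist := (history (algorithm R m c) w id s Pt).
Local Notation W := (window m n).
Local Notation pv := (pv s Pt).
Local Notation onP e := (e \in Pedges s Pt).

Definition run_state u r fwd := state m (li u) (lookup (hist r u)) r fwd.

Lemma size_hist r u : size (hist r u) = r.
Proof. by elim: r u => //= r IH u; rewrite size_rcons IH. Qed.

Lemma nth_hist r u k : k < r ->
  nth (fun _ => None) (hist r u) k = nth (fun _ => None) (hist k.+1 u) k.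
Proof.
elim: r => // r IH; rewrite ltnS leq_eqVlt => /orP [/eqP -> // | k_lt].
by rewrite [hist r.+1 u]/= nth_rcons size_hist k_lt IH.
Qed.

Lemma lookup_hist r u y k : k < r -> adj w y u ->
  lookup (hist r u) k (id y) = Some (pack n (run_state y k true, run_state y k false)).
Proof.
move=> k_lt y_adj; rewrite /lookup nth_hist // [hist k.+1 u]/= nth_rcons size_hist ltnn eqxx.
case: pickP => [z /andP [_ /eqP /id_inj -> //] | none]; last by have := none y; rewrite y_adj eqxx.
by rewrite /= /message size_hist.
Qed.

Lemma state_hist r r' u fwd : r < r' ->
  state m (li u) (lookup (hist r' u)) r fwd = run_state u r fwd.
Proof.
move=> r_lt; rewrite /run_state /state /=; congr (maxn _ _); apply: eq_bigr => e.
case/andP => /andP [w_gt0 _] ceil_le; congr (unpack _ _ _).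
have ceil_gt0 : 0 < ceiln (entry_weight fwd e) (unit_len m n r).
  by rewrite ceiln_gt0 ?expn_gt0.
have k_lt : r - ceiln (entry_weight fwd e) (unit_len m n r) < r.
  by rewrite ltn_subrL ceil_gt0 (leq_trans ceil_gt0 (leq_trans ceil_le (leq_mod _ _))).
by rewrite /lookup !nth_hist // (ltn_trans k_lt).
Qed.

Lemma hst_lt : hst Pt < n.
Proof.
have := max_card (mem (s :: Pt)).
by rewrite card_ord (card_uniqP (shortest_path_uniq P_shortest)).
Qed.

Lemma li_path_pv b : b <= hst Pt ->
  li_path (li (pv b)) = Some (b, pref w s Pt b, suff w s Pt b).
Proof.
have P_uniq := shortest_path_uniq P_shortest.
move=> b_le; rewrite /local_input; cbn [li_path].
by rewrite mem_nth // index_uniq.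
Qed.

Lemma li_pathP u b pr su : li_path (li u) = Some (b, pr, su) ->
  [/\ u = pv b, b <= hst Pt, pr = pref w s Pt b & su = suff w s Pt b].
Proof.
rewrite /local_input; cbn [li_path]; case: ifP => // u_in.
have := nth_index s u_in; have := index_mem u (s :: Pt); rewrite u_in.
by move: (index u _) => i i_lt pv_i [<- <- <-].
Qed.

Definition cost fwd b := if fwd then suff w s Pt b else pref w s Pt b.

Lemma anchor_pv fwd U T b : b <= hst Pt -> ceiln (cost fwd b) U <= T ->
  anchor fwd (li (pv b)) U T = rank fwd n b.
Proof. by move=> b_le; rewrite /anchor li_path_pv //; case: fwd => ->. Qed.

Lemma anchor_gt0 fwd u U T : 0 < anchor fwd (li u) U T -> exists b,
  [/\ u = pv b, b <= hst Pt, ceiln (cost fwd b) U <= T & anchor fwd (li u) U T = rank fwd n b].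
Proof.
rewrite /anchor; case E: (li_path _) => [[[b pr] su]|] //.
have [-> b_le -> ->] := li_pathP E.
by case: ifP => // ceil_le _; exists b; case: fwd ceil_le.
Qed.

Lemma rank_le fwd b : b <= hst Pt -> rank fwd n b <= n.
Proof. by have := hst_lt; case: fwd => /=; lia. Qed.

Lemma run_state_le u r fwd : run_state u r fwd <= n.
Proof.
rewrite /run_state /state /= geq_max; apply/andP; split.
  case: (posnP (anchor fwd (li u) (unit_len m n r) (clock m n r))) => [-> // |].
  by case/anchor_gt0 => b [_ b_le _ ->]; exact: rank_le.
by apply/bigmax_leqP_seq => e _ _; rewrite /unpack; case: (lookup _ _ _) => // p; rewrite geq_minl.
Qed.

(* Self-loops are no communication links, hence no relaxation steps. *)
Definition fdelay U : weights n := fun u y =>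
  if (u != y) && ((u, y) \notin Pedges s Pt) then ceiln (w u y) U else 0.
(* Backward values are forward values of the transposed graph. *)
Definition delay fwd U : weights n := if fwd then fdelay U else fun u y => fdelay U y u.

Lemma run_state_eq fwd k T u : T < W ->
  run_state u (k * W + T) fwd = maxn (anchor fwd (li u) (2 ^ k) T)
    (\max_(y | 0 < delay fwd (2 ^ k) u y <= T)
        run_state y (k * W + (T - delay fwd (2 ^ k) u y)) fwd).
Proof.
move=> T_lt; have [clockE unitE] := clock_phase k T_lt.
rewrite {1}/run_state /state /= clockE unitE; congr (maxn _ _).
rewrite big_map big_filter_cond big_enum_cond /=.
apply: eq_big => [y | y /andP [y_adj /andP [/andP [w_gt0 offP] ceil_le]]].
  case: fwd; rewrite /= /fdelay /adj [y == u]eq_sym;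
    case: (u == y); case: (_ \in _); rewrite /= ?ceiln_gt0 ?expn_gt0 ?andbF //;
    by case: (0 < w u y); case: (0 < w y u).
have -> : delay fwd (2 ^ k) u y =
    ceiln (entry_weight fwd (id y, w u y, w y u, onP (u, y), onP (y, u))) (2 ^ k).
  move: y_adj offP; clear w_gt0 ceil_le; rewrite /adj => /andP [y_neq _].
  by case: fwd; rewrite /= /fdelay ?(eq_sym u) y_neq => ->.
have d_gt0 : 0 < ceiln (entry_weight fwd (id y, w u y, w y u, onP (u, y), onP (y, u))) (2 ^ k).
  by rewrite ceiln_gt0 ?expn_gt0.
rewrite -addnBA // lookup_hist ?unpack_pack ?run_state_le //.
  by case: fwd w_gt0 offP ceil_le d_gt0.
by rewrite ltn_add2l ltn_subrL d_gt0 (leq_trans d_gt0 ceil_le).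
Qed.

Lemma run_state_sound fwd k T u : T < W -> 0 < run_state u (k * W + T) fwd -> exists b p,
  [/\ run_state u (k * W + T) fwd = rank fwd n b, b <= hst Pt,
      is_walk (delay fwd (2 ^ k)) u p, last u p = pv b &
      wlen (delay fwd (2 ^ k)) u p * 2 ^ k + cost fwd b <= T * 2 ^ k].
Proof.
move=> T_lt F_gt0.
have [p [walk_p wlen_le F_eq]] := relax_sound (run_state_eq fwd k) T_lt F_gt0.
move: F_gt0; rewrite F_eq => /anchor_gt0 [b [last_p b_le ceil_le ->]].
exists b, p; split => //.
have U_gt0 : 0 < 2 ^ k by rewrite expn_gt0.
have /andP [cost_le _] := ceilnP (cost fwd b) U_gt0.
apply: leq_trans (leq_add (leqnn _) cost_le) _; rewrite -mulnDl leq_mul2r.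
by rewrite -leq_subRL // ceil_le orbT.
Qed.

Lemma run_state_complete fwd k T u p b : T < W -> b <= hst Pt ->
  is_walk (delay fwd (2 ^ k)) u p -> last u p = pv b ->
  wlen (delay fwd (2 ^ k)) u p + ceiln (cost fwd b) (2 ^ k) <= T ->
  rank fwd n b <= run_state u (k * W + T) fwd.
Proof.
move=> T_lt b_le walk_p last_p len_le.
have := relax_complete (run_state_eq fwd k) T_lt walk_p (leq_trans (leq_addr _ _) len_le).
by rewrite last_p anchor_pv // leq_subRL // (leq_trans (leq_addr _ _) len_le).
Qed.

Lemma estimateE fwd i j : i <= hst Pt ->
  estimate m c fwd (li (pv i)) (hist (rounds m c n) (pv i)) j =
  ominl [seq if rank fwd n j <= run_state (pv i) r fwd
             then Some (cost (~~ fwd) i + clock m n r * unit_len m n r) else None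
        | r <- iota 0 (rounds m c n)].
Proof.
move=> i_le; rewrite /estimate li_path_pv //=; congr ominl; apply/eq_in_map => r.
by rewrite mem_iota => /andP [_ r_lt]; rewrite state_hist //; case: fwd.
Qed.

Lemma estimate_sound fwd i j x : i <= hst Pt ->
  estimate m c fwd (li (pv i)) (hist (rounds m c n) (pv i)) j = Some x -> exists k T,
  [/\ T < W, rank fwd n j <= run_state (pv i) (k * W + T) fwd & x = cost (~~ fwd) i + T * 2 ^ k].
Proof.
move=> i_le; rewrite estimateE // => /ominl_mem /mapP [r _].
case: ifP => // rank_le [->]; exists (r %/ W), (r %% W).
by rewrite -divn_eq ltn_pmod ?window_gt0.
Qed.

Lemma estimate_complete fwd i j k T : i <= hst Pt -> k < nscales c n -> T < W ->
  rank fwd n j <= run_state (pv i) (k * W + T) fwd ->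
  exists2 x, estimate m c fwd (li (pv i)) (hist (rounds m c n) (pv i)) j = Some x &
             x <= cost (~~ fwd) i + T * 2 ^ k.
Proof.
move=> i_le k_lt T_lt rank_le; rewrite estimateE //; apply: ominl_le; apply/mapP.
exists (k * W + T); last by have [-> ->] := clock_phase k T_lt; rewrite rank_le.
rewrite mem_iota roundsE ?(leq_ltn_trans _ (ltn_ord s)) //=.
apply: leq_trans (_ : k.+1 * W <= _); first by rewrite mulSn addnC ltn_add2r.
by rewrite leq_mul2r k_lt orbT.
Qed.

Local Notation avoids_P u p := (~~ has (fun e => e \in Pedges s Pt) (wedges u p)).

Lemma delay_walkE U u p : 0 < U ->
  is_walk (delay true U) u p = [&& is_walk w u p, avoids_P u p & path (fun a b => a != b) u p].
Proof.
move=> U_gt0; rewrite /is_walk -all_predC all_wedges -!path_relI.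
apply: eq_path => a b /=; rewrite /fdelay.
by case: (a != b); case: (_ \in _); rewrite /= ?andbF ?andbT ?ceiln_gt0.
Qed.

Lemma delay_walk_ceil U u p : is_walk (delay true U) u p ->
  path (fun a b => delay true U a b == ceiln (w a b) U) u p.
Proof. by apply: sub_path => a b; rewrite /= /fdelay; case: ifP. Qed.

Lemma delay_walk_fwd U u p : 0 < U -> is_walk (delay true U) u p ->
  [/\ is_walk w u p, avoids_P u p & wlen w u p <= wlen (delay true U) u p * U].
Proof.
move=> U_gt0 /[dup] /delay_walk_ceil /(wlen_ceil U_gt0) /andP [len_le _].
by rewrite delay_walkE // => /and3P [].
Qed.

Lemma walk_delay_fwd U u p : 0 < U -> is_walk w u p -> uniq (u :: p) -> avoids_P u p ->
  is_walk (delay true U) u p /\ wlen (delay true U) u p * U <= wlen w u p + size p * U.-1.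
Proof.
move=> U_gt0 walk_p /uniq_path_neq neq_p avoid_p.
have walk_d : is_walk (delay true U) u p by rewrite delay_walkE // walk_p avoid_p.
by split => //; have /andP [] := wlen_ceil U_gt0 (delay_walk_ceil walk_d).
Qed.

Lemma delay_walk_bwd U u p (q := rev (belast u p)) : 0 < U -> is_walk (delay false U) u p ->
  [/\ is_walk w (last u p) q, last (last u p) q = u, avoids_P (last u p) q &
      wlen w (last u p) q <= wlen (delay false U) u p * U].
Proof.
move=> U_gt0 walk_p.
have walk_q : is_walk (delay true U) (last u p) q by rewrite /is_walk rev_path.
have [walk_w avoid_q len_le] := delay_walk_fwd U_gt0 walk_q.
by rewrite last_rev_belast (wlen_transpose (delay true U)).
Qed.

Lemma walk_delay_bwd U x q (p := rev (belast x q)) : 0 < U ->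
  is_walk w x q -> uniq (x :: q) -> avoids_P x q ->
  [/\ is_walk (delay false U) (last x q) p, last (last x q) p = x &
      wlen (delay false U) (last x q) p * U <= wlen w x q + size q * U.-1].
Proof.
move=> U_gt0 walk_q uniq_q avoid_q.
have [walk_d len_le] := walk_delay_fwd U_gt0 walk_q uniq_q avoid_q.
by rewrite /is_walk rev_path last_rev_belast -wlen_transpose.
Qed.

Lemma estimate_fwd_sound i j x : i <= hst Pt ->
  estimate m c true (li (pv i)) (hist (rounds m c n) (pv i)) j = Some x ->
  exists L, cand w s Pt false (fun a => a = i) (fun b => j <= b) L /\ L <= x.
Proof.
move=> i_le /(estimate_sound i_le) [k [T [T_lt rank_le ->]]].
have [b [p [state_eq b_le walk_p last_p len_le]]] :=
  run_state_sound T_lt (leq_trans (ltn0Sn j) rank_le).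
have U_gt0 : 0 < 2 ^ k by rewrite expn_gt0.
have [walk_w avoid_p wlen_le] := delay_walk_fwd U_gt0 walk_p.
exists (pref w s Pt i + wlen w (pv i) p + suff w s Pt b); split.
  by exists i, b, p; rewrite state_eq in rank_le; split.
by rewrite -addnA leq_add2l (leq_trans _ len_le) ?leq_add2r.
Qed.

Lemma estimate_bwd_sound i j x : i <= hst Pt -> j < i ->
  estimate m c false (li (pv i)) (hist (rounds m c n) (pv i)) j = Some x ->
  exists L, cand w s Pt false (fun a => a <= j) (fun b => b = i) L /\ L <= x.
Proof.
move=> i_le j_lt /(estimate_sound i_le) [k [T [T_lt rank_le ->]]].
have n_gt : i < n := leq_ltn_trans i_le hst_lt.
have rank_gt0 : 0 < rank false n j by rewrite subn_gt0 (ltn_trans j_lt).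
have [a [p [state_eq a_le walk_p last_p len_le]]] :=
  run_state_sound T_lt (leq_trans rank_gt0 rank_le).
have U_gt0 : 0 < 2 ^ k by rewrite expn_gt0.
have [] := delay_walk_bwd U_gt0 walk_p; rewrite last_p => walk_q last_q avoid_q wlen_le.
exists (pref w s Pt a + wlen w (pv a) (rev (belast (pv i) p)) + suff w s Pt i); split.
  by exists a, i, (rev (belast (pv i) p)); rewrite state_eq /rank in rank_le; split => //; lia.
by move: len_le wlen_le; rewrite /= addnC; lia.
Qed.

Lemma bandwidth : bandwidth_ok (algorithm R m c) w id s Pt 4.
Proof.
move=> r u v _ /andP [/eqP uv _]; rewrite /= /message size_hist.
have n_ge2 : 1 < n.
  have : nat_of_ord u <> nat_of_ord v by move=> /ord_inj.
  by have := ltn_ord u; have := ltn_ord v; lia.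
by apply: pack_lt => //=; apply: run_state_le.
Qed.

Hypotheses (w_bound : forall u v, w u v <= n ^ c) (m_gt0 : 0 < m).

Lemma cost_le fwd b : cost fwd b <= n * n ^ c.
Proof.
have := hst_lt; rewrite /hst => P_lt.
case: fwd; apply: leq_trans (wlen_le_size _ _ w_bound) _; rewrite leq_mul2r; apply/orP; right.
  by rewrite size_drop; lia.
by rewrite size_take_min; lia.
Qed.

Lemma wlen_detour_le x q : size q <= zeta n -> wlen w x q <= n * n ^ c.
Proof.
move=> size_q; apply: leq_trans (wlen_le_size _ _ w_bound) _.
by rewrite leq_mul2r (leq_trans size_q) ?zeta_le ?orbT.
Qed.

Lemma estimate_le_detour fwd i j b p D (U := 2 ^ scale_of (m * (zeta n).+1) (D + cost fwd b)) :
  i <= hst Pt -> b <= hst Pt -> rank fwd n j <= rank fwd n b -> D <= n * n ^ c ->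
  size p <= zeta n -> is_walk (delay fwd U) (pv i) p -> last (pv i) p = pv b ->
  wlen (delay fwd U) (pv i) p * U <= D + size p * U.-1 ->
  exists2 x, estimate m c fwd (li (pv i)) (hist (rounds m c n) (pv i)) j = Some x &
             m * x <= m * cost (~~ fwd) i + m.+1 * (D + cost fwd b).
Proof.
move=> i_le b_le rank_jb D_le size_p walk_p last_p len_le.
set A := wlen (delay fwd U) (pv i) p + ceiln (cost fwd b) U.
have U_gt0 : 0 < U by rewrite expn_gt0.
have A_le : A * U <= D + cost fwd b + (size p).+1 * U.-1.
  have /andP [_ ceil_le] := ceilnP (cost fwd b) U_gt0.
  by rewrite mulnDl mulSn; move: len_le ceil_le; rewrite -/U; lia.
have [A_lt mA_le] := rounding_fits (k := (size p).+1) m_gt0 size_p A_le.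
have k_lt : scale_of (m * (zeta n).+1) (D + cost fwd b) < nscales c n.
  apply: scale_of_lt; first exact: leq_ltn_trans (leq0n _) (ltn_ord s).
  by rewrite expnS mul2n -addnn leq_add ?cost_le.
have := run_state_complete A_lt b_le walk_p last_p (leqnn A).
move=> /(leq_trans rank_jb) /(estimate_complete i_le k_lt A_lt) [x est x_le].
exists x => //; apply: leq_trans (leq_mul (leqnn m) x_le) _.
by rewrite mulnDr leq_add2l.
Qed.

Lemma estimate_fwd_complete i j L : i <= hst Pt ->
  cand w s Pt true (fun a => a = i) (fun b => j <= b) L ->
  exists2 x, estimate m c true (li (pv i)) (hist (rounds m c n) (pv i)) j = Some x &
             m * x <= m.+1 * L.
Proof.
move=> i_le [_ [b [q [-> j_le _ b_le [walk_q last_q avoid_q size_q ->]]]]].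
have [q' [walk' last' uniq' size' [sub' wlen']]] := walk_uniq walk_q.
have avoid' : avoids_P (pv i) q' by apply/hasPn => e /sub'; apply/hasPn.
have size_le : size q' <= zeta n := leq_trans size' (zeta_max size_q).
have D_le := wlen_detour_le (pv i) size_le.
set U := 2 ^ scale_of (m * (zeta n).+1) (wlen w (pv i) q' + cost true b).
have U_gt0 : 0 < U by rewrite expn_gt0.
have [walk_d len_d] := walk_delay_fwd U_gt0 walk' uniq' avoid'.
have [x est x_le] := estimate_le_detour (fwd := true) (j := j) i_le b_le j_le D_le size_le walk_d
  (etrans last' last_q) len_d.
by exists x => //; apply: leq_trans x_le _; rewrite /=; nia.
Qed.

Lemma estimate_bwd_complete i j L : i <= hst Pt ->
  cand w s Pt true (fun a => a <= j) (fun b => b = i) L ->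
  exists2 x, estimate m c false (li (pv i)) (hist (rounds m c n) (pv i)) j = Some x &
             m * x <= m.+1 * L.
Proof.
move=> i_le [a [_ [q [a_le_j -> a_le _ [walk_q last_q avoid_q size_q ->]]]]].
have [q' [walk' last' uniq' size' [sub' wlen']]] := walk_uniq walk_q.
have avoid' : avoids_P (pv a) q' by apply/hasPn => e /sub'; apply/hasPn.
have size_le : size q' <= zeta n := leq_trans size' (zeta_max size_q).
have D_le := wlen_detour_le (pv a) size_le.
set U := 2 ^ scale_of (m * (zeta n).+1) (wlen w (pv a) q' + cost false a).
have U_gt0 : 0 < U by rewrite expn_gt0.
have [] := walk_delay_bwd U_gt0 walk' uniq' avoid'.
rewrite last' last_q -(size_belast (pv a) q') -size_rev => walk_d last_d len_d.
have rank_ja : rank false n j <= rank false n a by rewrite leq_sub2l.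
have size_p : size (rev (belast (pv a) q')) <= zeta n by rewrite size_rev size_belast.
have [x est x_le] := estimate_le_detour i_le a_le rank_ja D_le size_p walk_d last_d len_d.
by exists x => //; apply: leq_trans x_le _; rewrite /=; nia.
Qed.

Variables (eps : R).
Hypotheses (eps_gt0 : (0 < eps)%R) (m_large : (eps^-1 < m%:R)%R).

Lemma output_fwd_good i j : i <= hst Pt ->
  good_approx w s Pt eps ((output (algorithm R m c) w id s Pt (pv i)).1 j)
    (fun a => a = i) (fun b => j <= b).
Proof.
move=> i_le; apply: good_approx_of_estimate eps_gt0 m_large _ _ => [x | L].
  exact: estimate_fwd_sound.
exact: estimate_fwd_complete.
Qed.

Lemma output_bwd_good i j : i <= hst Pt -> j < i ->
  good_approx w s Pt eps ((output (algorithm R m c) w id s Pt (pv i)).2 j)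
    (fun a => a <= j) (fun b => b = i).
Proof.
move=> i_le j_lt; apply: good_approx_of_estimate eps_gt0 m_large _ _ => [x | L].
  exact: estimate_bwd_sound.
exact: estimate_bwd_complete.
Qed.

End Execution.

Theorem lemma7p6 :
  forall (R : realType) (eps : R), (0 < eps)%R -> (eps < 1)%R ->
  forall c : nat,   (* weights and identifiers bounded by n^c *)
  exists (Alg : Algorithm R) (cB K k : nat),
    (* round complexity O~(n^(2/3)):  T(n)^3 <= K n^2 log^k n *)
    (forall n, alg_rounds Alg n ^ 3 <= K * n ^ 2 * (trunc_log 2 n).+1 ^ k) /\
    forall (n : nat) (w : weights n) (id : 'I_n -> nat) (s : 'I_n) (Pt : seq 'I_n),
      (forall u v, w u v <= n ^ c) ->
      injective id -> (forall v, id v < n ^ c) ->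
      shortest_path w s Pt ->
      bandwidth_ok Alg w id s Pt cB /\
      forall i, i <= hst Pt ->
        (forall j, i < j <= hst Pt ->
           good_approx w s Pt eps ((output Alg w id s Pt (pv s Pt i)).1 j)
             (fun a => a = i) (fun b => j <= b)) /\
        (forall j, j < i ->
           good_approx w s Pt eps ((output Alg w id s Pt (pv s Pt i)).2 j)
             (fun a => a <= j) (fun b => b = i)).
Proof.
move=> R eps eps_gt0 _ c.
have [m m_large m_gt0] : exists2 m, (eps^-1 < m%:R)%R & 0 < m.
  have m_large : (eps^-1 < (Num.bound eps^-1)%:R)%R by rewrite archi_boundP // invr_ge0 ltW.
  by exists (Num.bound eps^-1); rewrite // -(ltr0n R) (lt_trans _ m_large) ?invr_gt0.
exists (algorithm R m c), 4, (8 * ((c + 2) * (2 * m).+1) ^ 3), 3.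
split=> [n | n w id s Pt w_bound id_inj _ P_shortest]; first exact: rounds_cube.
split=> [|i i_le]; first exact: bandwidth.
split=> [j _ | j j_lt]; first exact: output_fwd_good.
exact: output_bwd_good.
Qed.
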